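(* Let $G$ and $H$ be graphs and $d\ge 0$ such that every vertex $v\in V(H)$ has degree at most $d$ in $H$ and degree at most $d$ in $G$. If there is a collection $\mathcal{F}$ of at least $4d+1$ linear forests covering the edges of $G$, then there is a collection of $|\mathcal{F}|$ linear forests covering the edges of $G\cup H$.
   Context: A linear forest is a graph which is a vertex-disjoint union of paths. A collection of graphs covers the edges of a graph if every edge lies in at least one graph of the collection. *)

From mathcomp Require Import all_boot.
Set Implicit Arguments. Unset Strict Implicit. Unset Printing Implicit Defensive.

Definition simple_graph (T : finType) (E : rel T) : Prop :=
  (forall x y, E x y = E y x) /\ (forall x, ~~ E x x).

Definition deg (T : finType) (E : rel T) (v : T) : nat := #|[set y | E v y]|.

Definition path_adj (T : finType) (p : seq T) (x y : T) : bool :=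
  ((x, y) \in zip p (behead p)) || ((y, x) \in zip p (behead p)).

(* Vertices of T not on any listed path are isolated (trivial paths). *)
Definition linear_forest (T : finType) (F : rel T) : Prop :=
  exists ps : seq (seq T),
    uniq (flatten ps) /\
    (forall x y, F x y <-> exists2 p, p \in ps & path_adj p x y).

Definition covers (T : finType) (k : nat) (fs : 'I_k -> rel T) (E : rel T) : Prop :=
  forall x y, E x y -> exists i, fs i x y.

Definition graph_union (T : finType) (G H : rel T) : rel T :=
  [rel x y | G x y || H x y].

From mathcomp Require Import all_boot zify.
Set Implicit Arguments. Unset Strict Implicit. Unset Printing Implicit Defensive.

(* First make the forests edge-disjoint and contained in G by keeping each
   edge only in the first forest containing it; cutting the paths of a linear
   forest at the deleted edges leaves a linear forest.  Then add the edges uv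
   of H one at a time.  Every edge at u other than uv lies in G or in H, so by
   edge-disjointness at most 2d - 1 forests have an edge at u, and likewise at
   v.  As 4d - 2 < |F|, some forest has both u and v isolated, and uv can be
   added to it as a new path. *)

Section PathSplitting.

Variable T : eqType.
Implicit Types (keep : rel T) (x y a b : T) (s p : seq T).

(* Cuts the path x :: s between consecutive vertices a, b with ~~ keep a b. *)
Fixpoint split_path_from keep x s : seq (seq T) :=
  if s is y :: s' then
    let r := split_path_from keep y s' in
    if keep x y then (x :: head [::] r) :: behead r else [:: x] :: r
  else [:: [:: x]].

Lemma split_path_fromE keep x s :
  exists q r, split_path_from keep x s = (x :: q) :: r.
Proof.
case: s => [|y s] /=; first by exists [::], [::].
by case: (keep x y); do 2 eexists.
Qed.

Lemma flatten_split_path_from keep x s :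
  flatten (split_path_from keep x s) = x :: s.
Proof.
elim: s x => [|y s IHs] x //=.
have [q [r Er]] := split_path_fromE keep y s.
by move: (IHs y); rewrite Er; case: (keep x y) => /= ->.
Qed.

Lemma has_split_path_from keep x s a b :
  has (fun q => (a, b) \in zip q (behead q)) (split_path_from keep x s)
  = ((a, b) \in zip (x :: s) s) && keep a b.
Proof.
elim: s x => [|y s IHs] x //=.
have [q [r Er]] := split_path_fromE keep y s.
have := IHs y; rewrite Er /= in_cons.
case: (eqVneq (a, b) (x, y)) => [[-> ->]|ab_xy] /= IHy.
  by case: (keep x y) IHy => /= [_|->]; rewrite ?mem_head ?andbF.
by case: (keep x y); rewrite /= ?in_cons -?orbA IHy //; move: ab_xy => /negPf ->.
Qed.

Definition split_path keep p :=
  if p is x :: s then split_path_from keep x s else [::].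

Lemma flatten_split_path keep p : flatten (split_path keep p) = p.
Proof. by case: p => //= x s; rewrite flatten_split_path_from. Qed.

Lemma has_split_path keep p a b :
  has (fun q => (a, b) \in zip q (behead q)) (split_path keep p)
  = ((a, b) \in zip p (behead p)) && keep a b.
Proof. by case: p => //= x s; rewrite has_split_path_from. Qed.

Lemma mem_zip_behead_neighbour p a b u :
  (a, b) \in zip p (behead p) -> u \in p ->
  exists z, ((u, z) \in zip p (behead p)) || ((z, u) \in zip p (behead p)).
Proof.
elim: p a b => [|x [|y s] IHp] a b //= ab_p; rewrite in_cons => /orP [/eqP ->|u_ys].
  by exists y; rewrite mem_head.
case: s IHp ab_p u_ys => [_ _|z s IHp ab_p u_ys].
  by rewrite mem_seq1 => /eqP ->; exists x; rewrite mem_head orbT.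
have [w Hw] := IHp y z (mem_head _ _) u_ys.
by exists w; move: Hw; rewrite /= !in_cons => /orP [] ->; rewrite ?orbT.
Qed.

End PathSplitting.

Section LinearForests.

Variable T : finType.
Implicit Types (F keep : rel T) (p : seq T) (ps : seq (seq T)) (u v x y : T).

Lemma path_adjC p x y : path_adj p x y = path_adj p y x.
Proof. exact: orbC. Qed.

Lemma path_adj_pair u v x y :
  path_adj [:: u; v] x y = (x == u) && (y == v) || (x == v) && (y == u).
Proof. by rewrite /path_adj /= !inE !xpair_eqE [(y == u) && _]andbC. Qed.

Lemma linear_forest_sym F : linear_forest F -> symmetric F.
Proof.
by move=> [ps [_ Fps]] x y; apply/idP/idP => /Fps [p p_ps];
  rewrite path_adjC => adj_p; apply/Fps; exists p.
Qed.

Lemma has_path_adj_split_path keep p x y :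
  symmetric keep ->
  has (fun q => path_adj q x y) (split_path keep p) = path_adj p x y && keep x y.
Proof.
move=> keepC; rewrite (eq_has (a2 := predU (fun q => (x, y) \in zip q (behead q))
                                         (fun q => (y, x) \in zip q (behead q)))) //.
by rewrite has_predU !has_split_path (keepC y) -andb_orl.
Qed.

Lemma linear_forest_restrict F keep :
  linear_forest F -> symmetric keep ->
  linear_forest [rel x y | F x y && keep x y].
Proof.
move=> [ps [uniq_ps Fps]] keepC.
exists (flatten [seq split_path keep p | p <- ps]); split.
  suff -> : flatten (flatten [seq split_path keep p | p <- ps]) = flatten ps by [].
  by elim: ps {uniq_ps Fps} => //= p ps IHps; rewrite flatten_cat flatten_split_path IHps.
move=> x y /=; split.
  move=> /andP [/Fps [p p_ps adj_p] kxy].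
  have /hasP [q q_p adj_q] : has (fun q => path_adj q x y) (split_path keep p).
    by rewrite has_path_adj_split_path // adj_p.
  by exists q => //; apply/flatten_mapP; exists p.
move=> [q /flatten_mapP [p p_ps q_p] adj_q].
have : has (fun q => path_adj q x y) (split_path keep p) by apply/hasP; exists q.
by rewrite has_path_adj_split_path // => /andP [adj_p ->]; rewrite andbT; apply/Fps; exists p.
Qed.

Lemma path_adj_neighbour p x y u :
  path_adj p x y -> u \in p -> exists z, path_adj p u z.
Proof.
by rewrite /path_adj => /orP [] /mem_zip_behead_neighbour nb /nb.
Qed.

Lemma linear_forest_add_edge F u v :
  linear_forest F -> u != v -> (forall y, ~~ F u y) -> (forall y, ~~ F v y) ->
  linear_forest [rel x y | F x y || path_adj [:: u; v] x y].
Proof.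
move=> [ps [uniq_ps Fps]] uv isol_u isol_v.
pose P (q : seq T) := (u \notin q) && (v \notin q).
have P_adj p x y : p \in ps -> path_adj p x y -> P p.
  move=> p_ps adj_p; apply/andP; split; apply/negP => /(path_adj_neighbour adj_p) [z adj_z].
    by case/negP: (isol_u z); apply/Fps; exists p.
  by case/negP: (isol_v z); apply/Fps; exists p.
exists ([:: u; v] :: filter P ps); split.
  have out_uv w : w \in [:: u; v] -> w \notin flatten (filter P ps).
    rewrite !inE => w_uv; apply/flattenP => [[q]].
    rewrite mem_filter => /andP [/andP [u_q v_q] _].
    by case/orP: w_uv => /eqP ->; apply/negP.
  rewrite /= negb_or uv !out_uv ?inE ?eqxx ?orbT //=.
  have := perm_uniq (perm_flatten (permEl (perm_filterC P ps))).
  by rewrite flatten_cat cat_uniq uniq_ps => /andP [].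
move=> x y /=; split.
  case/orP => [/Fps [p p_ps adj_p] | adj_uv]; last by exists [:: u; v]; rewrite ?mem_head.
  by exists p; rewrite // in_cons mem_filter p_ps (P_adj p x y) ?orbT.
move=> [q]; rewrite in_cons => /orP [/eqP -> -> | ]; first by rewrite orbT.
by rewrite mem_filter => /andP [_ q_ps] adj_q; apply/orP; left; apply/Fps; exists q.
Qed.

End LinearForests.

Section Decompositions.

Variables (T : finType) (k : nat).
Implicit Types (E : rel T) (fs : 'I_k -> rel T) (u v w : T).

Definition lf_decomposition fs E :=
  [/\ forall i, linear_forest (fs i),
      forall i j x y, fs i x y -> fs j x y -> i = j,
      forall i x y, fs i x y -> E x y
    & covers fs E].

Lemma eq_lf_decomposition fs E E' :
  E =2 E' -> lf_decomposition fs E -> lf_decomposition fs E'.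
Proof.
move=> eqE [lf_fs disj_fs sub_fs cov_fs]; split=> // [i x y|x y].
  by rewrite -eqE; apply: sub_fs.
by rewrite -eqE; apply: cov_fs.
Qed.

Lemma lf_decomposition_of_cover fs E :
  symmetric E -> (forall i, linear_forest (fs i)) -> covers fs E ->
  exists fs', lf_decomposition fs' E.
Proof.
move=> symE lf_fs cov_fs.
pose first_in (i : 'I_k) x y := E x y && [forall j : 'I_k, (j < i) ==> ~~ fs j x y].
exists (fun i => [rel x y | fs i x y && first_in i x y]); split.
- move=> i; apply: linear_forest_restrict => // x y.
  rewrite /first_in symE; congr andb; apply: eq_forallb => j.
  by rewrite (linear_forest_sym (lf_fs j)).
- move=> i j x y /and3P [fs_i _ /forallP first_i] /and3P [fs_j _ /forallP first_j].
  apply: val_inj; case: (ltngtP i j) => // [ij|ji].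
    by move: (first_j i); rewrite ij fs_i.
  by move: (first_i j); rewrite ji fs_j.
- by move=> i x y /and3P [].
move=> x y Exy; have [i0 fs_i0] := cov_fs x y Exy.
case: (arg_minnP (P := fun i : 'I_k => fs i x y) val fs_i0) => i fs_i min_i.
exists i; rewrite /= fs_i /first_in Exy; apply/forallP => j; apply/implyP => ji.
by apply: contraTN ji => /min_i; rewrite -leqNgt.
Qed.

Lemma card_forests_at fs E w :
  lf_decomposition fs E -> #|[set i | [exists y, fs i w y]]| <= deg E w.
Proof.
move=> [_ disj_fs sub_fs _].
pose nb i := odflt w [pick y | fs i w y].
have fs_nb i : i \in [set i | [exists y, fs i w y]] -> fs i w (nb i).
  by rewrite inE /nb => /existsP [y fs_y]; case: pickP => [z ->|/(_ y)]; rewrite ?fs_y.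
rewrite -(card_in_imset (f := nb)) => [|i j /fs_nb fs_i /fs_nb fs_j nb_ij].
  apply: subset_leq_card; apply/subsetP => y /imsetP [i /fs_nb fs_i ->].
  by rewrite inE; apply: sub_fs fs_i.
by apply: (disj_fs i j w (nb i)); rewrite // nb_ij.
Qed.

Lemma lf_decomposition_add_edge fs E u v :
  lf_decomposition fs E -> u != v -> ~~ E u v -> deg E u + deg E v < k ->
  exists fs', lf_decomposition fs' [rel x y | E x y || path_adj [:: u; v] x y].
Proof.
move=> decE uv nEuv small_deg; have [lf_fs disj_fs sub_fs cov_fs] := decE.
have new_uv j x y : path_adj [:: u; v] x y -> ~~ fs j x y.
  rewrite path_adj_pair => /orP [] /andP [/eqP -> /eqP ->]; apply: contra nEuv.
    exact: sub_fs.
  by rewrite (linear_forest_sym (lf_fs j)); apply: sub_fs.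
pose busy := [set i | [exists y, fs i u y]] :|: [set i | [exists y, fs i v y]].
have [i] : exists i, i \notin busy.
  have busy_lt : #|busy| < k.
    apply: leq_ltn_trans (leq_card_setU _ _) _.
    exact: leq_ltn_trans (leq_add (card_forests_at u decE) (card_forests_at v decE)) small_deg.
  have /card_gt0P [i] : 0 < #|~: busy| by have := cardsC busy; rewrite card_ord; lia.
  by rewrite inE; exists i.
rewrite !inE negb_or => /andP [/existsPn isol_u /existsPn isol_v].
pose fs' (j : 'I_k) : rel T :=
  if j == i then fun x y => fs i x y || path_adj [:: u; v] x y else fs j.
have fs'E j x y : fs' j x y -> fs j x y \/ j = i /\ path_adj [:: u; v] x y.
  by rewrite /fs'; case: eqP => [-> /orP [] | _]; auto.
exists fs'; split.
- move=> j; rewrite /fs'; case: eqP => _; last exact: lf_fs.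
  exact: linear_forest_add_edge.
- move=> j1 j2 x y /fs'E [fs1 | [-> uv1]] /fs'E [fs2 | [-> uv2]] //.
  + exact: disj_fs fs1 fs2.
  + by move: (new_uv j1 x y uv2); rewrite fs1.
  + by move: (new_uv j2 x y uv1); rewrite fs2.
- by move=> j x y /fs'E [/sub_fs | [_]] /= ->; rewrite ?orbT.
move=> x y /orP [/cov_fs [j fs_j] | uv_xy]; last by exists i; rewrite /fs' eqxx /= uv_xy orbT.
by exists j; rewrite /fs'; case: eqP => // ji; rewrite -ji fs_j.
Qed.

End Decompositions.

Definition edge_rel (T : finType) (L : seq (T * T)) : rel T :=
  [rel x y | has (fun e => path_adj [:: e.1; e.2] x y) L].

Lemma edge_relC (T : finType) (L : seq (T * T)) : symmetric (edge_rel L).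
Proof. by move=> x y; apply: eq_has => e; rewrite path_adjC. Qed.

Section AddingEdges.

Variables (T : finType) (G H : rel T).
Hypotheses (symG : symmetric G) (symH : symmetric H).
Implicit Types (L : seq (T * T)) (u v w : T).

Lemma edge_rel_sub L x y : all (fun e => H e.1 e.2) L -> edge_rel L x y -> H x y.
Proof.
move=> /allP HL /hasP [[a b] /HL /= Hab].
by rewrite path_adj_pair => /orP [] /andP [/eqP -> /eqP ->]; rewrite // symH.
Qed.

Lemma deg_union_edge_rel_lt L w w' :
  all (fun e => H e.1 e.2) L -> H w w' -> ~~ (G w w' || edge_rel L w w') ->
  deg [rel x y | G x y || edge_rel L x y] w < deg G w + deg H w.
Proof.
move=> HL Hww' nEww'; rewrite /deg.
apply: (@leq_ltn_trans #|[set y | G w y] :|: ([set y | H w y] :\ w')|).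
  apply/subset_leq_card/subsetP => y; rewrite !inE /= => /orP [-> // | Lwy].
  rewrite (edge_rel_sub HL Lwy) andbT; apply/orP; right.
  by apply: contraNneq nEww' => <-; rewrite Lwy orbT.
apply: leq_ltn_trans (leq_card_setU _ _) _.
by rewrite [X in _ < _ + X](cardsD1 w') inE Hww' add1n addnS.
Qed.

Lemma lf_decomposition_add_edges k (fs : 'I_k -> rel T) L :
  (forall x, ~~ H x x) ->
  (forall u v, H u v -> deg G u + deg H u + (deg G v + deg H v) <= k.+1) ->
  lf_decomposition fs G -> all (fun e => H e.1 e.2) L ->
  exists fs' : 'I_k -> rel T, lf_decomposition fs' [rel x y | G x y || edge_rel L x y].
Proof.
move=> irrH degH decG; elim: L => [|[u v] L IHL] /=.
  by exists fs; apply: eq_lf_decomposition decG => x y /=; rewrite orbF.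
move=> /andP [Huv HL]; have [fs1 dec1] := IHL HL.
set E := [rel x y | G x y || edge_rel L x y] in dec1.
have eqE : [rel x y | G x y || edge_rel ((u, v) :: L) x y]
           =2 [rel x y | E x y || path_adj [:: u; v] x y].
  by move=> x y /=; rewrite orbA orbAC.
case: (boolP (E u v)) => [Euv | nEuv].
  exists fs1; apply: eq_lf_decomposition dec1 => x y; rewrite eqE /=.
  case: (boolP (path_adj _ x y)); rewrite ?orbF ?orbT //.
  rewrite path_adj_pair => /orP [] /andP [/eqP -> /eqP ->] //.
  by move: Euv; rewrite /= symG edge_relC.
have uv : u != v by apply: contraTneq Huv => ->; exact: irrH.
have Hvu : H v u by rewrite symH.
have nEvu : ~~ E v u by move: nEuv; rewrite /= symG edge_relC.
have deg_u : deg E u < deg G u + deg H u := deg_union_edge_rel_lt HL Huv nEuv.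
have deg_v : deg E v < deg G v + deg H v := deg_union_edge_rel_lt HL Hvu nEvu.
have [fs' dec'] : exists fs' : 'I_k -> rel T,
    lf_decomposition fs' [rel x y | E x y || path_adj [:: u; v] x y].
  apply: lf_decomposition_add_edge dec1 uv nEuv _; by have := degH u v Huv; lia.
by exists fs'; apply: eq_lf_decomposition dec' => x y; rewrite eqE.
Qed.

End AddingEdges.

Theorem lemma3p1 (T : finType) (G H : rel T) (VH : {set T}) (d k : nat)
  (fs : 'I_k -> rel T) :
  simple_graph G -> simple_graph H ->
  (forall x y, H x y -> (x \in VH) && (y \in VH)) ->
  (forall v, v \in VH -> deg H v <= d /\ deg G v <= d) ->
  4 * d + 1 <= k ->
  (forall i, linear_forest (fs i)) ->
  covers fs G ->
  exists fs' : 'I_k -> rel T,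
    (forall i, linear_forest (fs' i)) /\ covers fs' (graph_union G H).
Proof.
move=> [symG _] [symH irrH] inVH degVH dk lf_fs cov_fs.
have [fs0 dec0] := lf_decomposition_of_cover symG lf_fs cov_fs.
have degH u v : H u v -> deg G u + deg H u + (deg G v + deg H v) <= k.+1.
  by move=> /inVH /andP [/degVH [? ?] /degVH [? ?]]; lia.
pose L := enum [pred e : T * T | H e.1 e.2].
have HL : all (fun e => H e.1 e.2) L by apply/allP => e; rewrite mem_enum.
have [fs' [lf' _ _ cov']] := lf_decomposition_add_edges symG symH irrH degH dec0 HL.
exists fs'; split => // x y /orP [Gxy | Hxy]; apply: cov'; rewrite /= ?Gxy //.
apply/orP; right; apply/hasP; exists (x, y); first by rewrite mem_enum.
by rewrite path_adj_pair !eqxx.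
Qed.
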